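(* Let $\pi$ be a set of primes, $G$ a finite group, $H$ a $\pi$-Hall subgroup of $G$, and $A=A_1\times\dots\times A_s$ a normal subgroup of $G$ which is the (internal) direct product of subgroups $A_1,\dots,A_s$, each of which is normal in $G$. Assume $G=HAC_G(A)$. Then $k_\pi^G(A)=k_\pi^G(A_1)\cdots k_\pi^G(A_s)$.
   Context: All groups are finite. A subgroup $H$ of $G$ is a $\pi$-Hall subgroup if all prime divisors of $|H|$ lie in $\pi$ and no prime divisor of $|G:H|$ lies in $\pi$. For a subnormal subgroup $A$ of a group $G$ possessing $\pi$-Hall subgroups, a $G$-induced $\pi$-Hall subgroup of $A$ is a subgroup $K\cap A$ with $K$ a $\pi$-Hall subgroup of $G$; an $A$-class of $G$-induced $\pi$-Hall subgroups is a set $\{(K\cap A)^x\mid x\in A\}$ with $K$ a $\pi$-Hall subgroup of $G$; and $k_\pi^G(A)$ denotes the number of distinct $A$-classes of $G$-induced $\pi$-Hall subgroups of $A$. *)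

From HB Require Import structures.
From mathcomp Require Import all_boot all_order all_fingroup all_solvable.
Set Implicit Arguments. Unset Strict Implicit. Unset Printing Implicit Defensive.

Local Open Scope group_scope.

Definition k_pi (gT : finGroupType) (pi : nat_pred) (G A : {set gT}) : nat :=
  #|[set (gval K :&: A) :^: A | K : {group gT} & pi.-Hall(G) K]|.

From mathcomp Require Import all_boot all_order all_fingroup all_solvable.
Set Implicit Arguments. Unset Strict Implicit. Unset Printing Implicit Defensive.
Local Open Scope group_scope.

(* The map K |-> ((K :&: A_i) :^: A_i)_i on pi-Hall subgroups K of G is
   constant exactly on the A-classes of the K :&: A: the latter is the direct
   product of its Hall components K :&: A_i, on which an element of A acts
   through its A_i-component.  The map is onto the product of the sets of
   A_i-classes: given Hall subgroups K_i, the product U of the K_i :&: A_i is a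
   pi-Hall subgroup of A, and since G = K A 'C_G(A) for every Hall K, every
   G-conjugate of U is an A-conjugate, i.e. H A = 'N_(HA)(U) A.  A
   Schur-Zassenhaus complement in 'N_(HA)(U) / U then lifts to a pi-Hall
   subgroup Q of G with Q :&: A = U. *)

Lemma partn_prod (I : Type) (r : seq I) (P : pred I) (F : I -> nat) pi :
  (forall i, P i -> 0 < F i)%N ->
  ((\prod_(i <- r | P i) F i)`_pi = \prod_(i <- r | P i) (F i)`_pi)%N.
Proof.
move=> F_gt0; suff [] : ((\prod_(i <- r | P i) F i)`_pi = \prod_(i <- r | P i) (F i)`_pi
                  /\ 0 < \prod_(i <- r | P i) F i)%N by [].
elim/big_rec2: _ => [|i m n Pi [<- n_gt0]]; first by rewrite partn1.
by rewrite partnM ?muln_gt0 ?F_gt0.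
Qed.

Lemma card_imset_fibers (T R : finType) (D : {pred T}) (f : T -> R) :
  #|f @: D| = #|[set [set y in D | f y == f x] | x in D]|.
Proof.
rewrite -(card_in_imset (f := fun u => [set y in D | f y == u])).
  by rewrite -imset_comp.
move=> _ _ /imsetP[x Dx ->] /imsetP[x' Dx' ->] /setP/(_ x).
by rewrite !inE Dx eqxx /= => /esym/eqP.
Qed.

Lemma eq_card_in_imset (T R S : finType) (D : {pred T}) (f : T -> R) (g : T -> S) :
  {in D &, forall x y, (f x == f y) = (g x == g y)} -> #|f @: D| = #|g @: D|.
Proof.
move=> eq_fg; rewrite [LHS]card_imset_fibers [RHS]card_imset_fibers.
apply: (congr1 (fun P : {set {set T}} => #|P|)).
apply: eq_in_imset => x Dx; apply/setP => y; rewrite !inE.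
by case Dy: (y \in D); rewrite //= eq_fg.
Qed.

Section HallSubgroups.
Variable gT : finGroupType.
Implicit Types (X Y : {set gT}) (B : {group gT}).

Lemma conjugates_eqP X Y B :
  reflect (exists2 x, x \in B & Y = X :^ x) (X :^: B == Y :^: B).
Proof.
apply: (iffP eqP) => [eqXY | [x Bx ->]]; last by rewrite conjugates_conj lcoset_id.
have : Y \in X :^: B by rewrite eqXY -{1}(conjsg1 Y) imset_f.
by case/imsetP=> x Bx ->; exists x.
Qed.

Lemma mulg_normal_Hall pi (G H K M : {group gT}) :
  pi.-Hall(G) H -> pi.-Hall(G) K -> M <| G -> H * M = G -> K * M = G.
Proof.
move=> hallH hallK nsMG defG; apply/eqP.
rewrite eqEcard mul_subG ?(pHall_sub hallK) ?normal_sub //=.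
have cardHM := mul_cardG H M; have cardKM := mul_cardG K M.
rewrite defG (card_Hall (Hall_setI_normal nsMG hallH)) (card_Hall hallH) in cardHM.
rewrite (card_Hall (Hall_setI_normal nsMG hallK)) (card_Hall hallK) cardHM in cardKM.
by move/eqP: cardKM; rewrite eqn_pmul2r ?part_gt0 // => /eqP ->.
Qed.

Lemma Hall_over_normal_pgroup pi (P W U : {group gT}) :
    W <| P -> P \subset 'N(U) -> pi.-Hall(W) U -> pi.-nat #|P : W| ->
  exists2 Q : {group gT}, pi.-Hall(P) Q & U \subset Q.
Proof.
move=> nsWP nUP hallU piPW; have [sWP _] := andP nsWP.
have [sUW piU pi'WU] := and3P hallU; have nUW := subset_trans sWP nUP.
have nsUP : U <| P by rewrite /normal (subset_trans sUW sWP).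
have hallWb : pi^'.-Hall(P / U) (W / U).
  rewrite /pHall quotientS //= /pgroup card_quotient // pi'WU pnatNK.
  by rewrite index_quotient_eq ?subIset ?sUW ?orbT.
have /splitsP[Qb complQb] :=
  SchurZassenhaus_split (pHall_Hall hallWb) (quotient_normal U nsWP).
rewrite (compl_pHall _ hallWb) pHallNK in complQb.
pose Q := (coset U @*^-1 Qb)%G.
have sUQ : U \subset Q by rewrite -{1}(ker_coset U) ker_sub_pre.
have nsUQ : U <| Q by rewrite /normal sUQ morphpre_sub.
exists Q => //; rewrite -(pquotient_pHall piU nsUP nsUQ) cosetpreK //.
Qed.

Lemma exists_Hall_setI_normal pi (G H A U : {group gT}) :
    pi.-Hall(G) H -> A <| G -> pi.-Hall(A) U -> H \subset 'N(U) * A ->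
  exists2 Q : {group gT}, pi.-Hall(G) Q & Q :&: A = U.
Proof.
move=> hallH nsAG hallU sH_NUA; have [sAG nAG] := andP nsAG.
have sHG := pHall_sub hallH; have nAH := subset_trans sHG nAG.
have sUA := pHall_sub hallU.
(* P covers H A modulo A, so the index of W = P :&: A in P is a pi-number. *)
pose P := ((H <*> A) :&: 'N(U))%G; pose W := (P :&: A)%G.
have sPG : P \subset G by rewrite subIset // join_subG sHG sAG.
have defPA : A * P = H <*> A.
  rewrite -normC ?(subset_trans sPG) //; apply/eqP.
  rewrite eqEsubset mul_subG ?subsetIl ?joing_subr //= norm_joinEl //.
  apply/subsetP => _ /mulsgP[h a Hh Aa ->].
  have /mulsgP[n a' Nn Aa' def_h] := subsetP sH_NUA h Hh; rewrite def_h in Hh *.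
  rewrite -mulgA; apply: mem_mulg; last exact: groupM.
  by rewrite in_setI Nn andbT -(mulgK a' n) mem_mulg ?groupV.
have indexPW : #|P : W| = #|H : H :&: A|.
  by rewrite /W /= !indexgI -indexMg defPA norm_joinEl // (normC nAH) indexMg.
have sUW : U \subset W.
  by rewrite !subsetI sUA normG (subset_trans sUA) ?joing_subr.
have hallUW : pi.-Hall(W) U by apply: pHall_subl sUW (subsetIr P A) hallU.
have piPW : pi.-nat #|P : W|.
  by rewrite indexPW (pnat_dvd (dvdn_indexg _ _) (pHall_pgroup hallH)).
have [Q hallQ sUQ] :=
  Hall_over_normal_pgroup (normalGI sPG nsAG) (subsetIr _ _) hallUW piPW.
have hallQG : pi.-Hall(G) Q.
  apply/pHallP; split; first exact: subset_trans (pHall_sub hallQ) sPG.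
  rewrite (card_Hall hallQ) -(Lagrange (subsetIl P A)) partnM // -/W.
  rewrite -(card_Hall hallUW) part_pnat_id // indexPW.
  rewrite (card_Hall hallU) -(card_Hall (Hall_setI_normal nsAG hallH)).
  by rewrite Lagrange ?subsetIl // (card_Hall hallH).
exists Q => //; apply: sub_pHall hallU _ _ (subsetIr _ _).
  exact: pgroupS (subsetIl _ _) (pHall_pgroup hallQ).
by rewrite subsetI sUQ sUA.
Qed.

End HallSubgroups.

Section BigDirectProduct.
Variables (gT : finGroupType) (I : finType) (As : I -> {group gT}) (A : {group gT}).
Hypothesis defA : \big[dprod/1]_i As i = A.

Lemma bigdprod_sub i : As i \subset A.
Proof. by rewrite -(bigdprodWY defA) sub_gen // (bigcup_max i). Qed.

Lemma bigdprod_normal i : As i <| A.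
Proof. by have := defA; rewrite (bigD1 i) //= => /dprod_normal2[]. Qed.

Lemma bigdprod_cent i j : i != j -> As i \subset 'C(As j).
Proof.
have /bigcprodYP cAs : \big[cprod/1]_i As i == (\prod_i As i)%G.
  by rewrite (bigdprodWcp defA) bigprodGE (bigdprodWY defA).
exact: cAs.
Qed.

Lemma prod_mem_bigdprod (c : I -> gT) :
  (forall i, c i \in As i) -> \prod_i c i \in A.
Proof. by move=> Ac; rewrite -(bigdprodW defA); apply: mem_prodg => i _. Qed.

Lemma conjsg_bigprod (c : I -> gT) i (X : {set gT}) :
  (forall j, c j \in As j) -> X \subset As i -> X :^ (\prod_j c j) = X :^ c i.
Proof.
move=> Ac sXAi; have enum_i : i \in index_enum I by rewrite mem_index_enum.
rewrite (perm_bigcprod (bigdprodWcp defA) _ (perm_to_rem enum_i)); last first.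
  by move=> j _; apply: Ac.
rewrite big_cons conjsgM rem_filter ?index_enum_uniq // big_filter.
apply/normP; apply: (subsetP (cent_sub _)).
have sXAi' : X :^ c i \subset As i by rewrite -(conjGid (Ac i)) conjSg.
apply: (subsetP (centS sXAi')); apply: group_prod => j /= neq_ji.
exact: (subsetP (bigdprod_cent neq_ji)).
Qed.

Lemma conjIg_bigdprod (X : {set gT}) a i : a \in A ->
  exists2 x, x \in As i & X :^ a :&: As i = (X :&: As i) :^ x.
Proof.
move=> Aa; have [c [Ac def_a _]] := mem_bigdprod defA Aa.
have {}Ac j : c j \in As j by apply: Ac.
exists (c i) => //; rewrite -(conjsg_bigprod Ac (subsetIr X (As i))) -def_a.
by rewrite conjIg (normP (subsetP (normal_norm (bigdprod_normal i)) a Aa)).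
Qed.

Lemma bigdprod_subgroups (B : I -> {group gT}) :
  (forall i, B i \subset As i) -> \big[dprod/1]_i B i = <<\bigcup_i B i>>.
Proof.
move=> sBAs; rewrite -bigprodGE; apply/eqP/bigdprodYP => i _.
have /bigdprodYP dxAs : \big[dprod/1]_i As i == (\prod_i As i)%G.
  by rewrite defA bigprodGE (bigdprodWY defA).
have sBAs' : (\prod_(j | true && (j != i)) B j)%G
              \subset (\prod_(j | true && (j != i)) As j)%G.
  rewrite !bigprodGE genS //; apply/bigcupsP => j /= neq_ji.
  by rewrite (bigcup_max j) ?neq_ji.
apply: subset_trans sBAs' (subset_trans (dxAs i isT) _).
apply/subsetP => x; rewrite !inE => /andP[ntx cx].
rewrite (subsetP (centS (sBAs i))) // andbT.
by apply: contra ntx => /andP[-> /(subsetP (sBAs i))].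
Qed.

Lemma bigdprod_Hall pi (B : I -> {group gT}) :
  (forall i, pi.-Hall(As i) (B i)) -> pi.-Hall(A) <<\bigcup_i B i>>.
Proof.
move=> hallB; have sBAs i := pHall_sub (hallB i).
apply/pHallP; split.
  rewrite gen_subG; apply/bigcupsP => i _.
  exact: subset_trans (sBAs i) (bigdprod_sub i).
rewrite -(bigdprod_card (bigdprod_subgroups sBAs)) -(bigdprod_card defA).
rewrite partn_prod => [|i _]; last exact: cardG_gt0.
by apply: eq_bigr => i _; rewrite (card_Hall (hallB i)).
Qed.

Lemma bigdprod_setI_Hall pi (K : {group gT}) :
    pi.-group K -> (forall i, pi.-Hall(As i) (K :&: As i)) ->
  K :&: A = <<\bigcup_i (K :&: As i)>>.
Proof.
move=> piK hallKAs.
have hallKA := bigdprod_Hall (B := fun i => (K :&: As i)%G) hallKAs.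
apply: sub_pHall hallKA (pgroupS (subsetIl K A) piK) _ (subsetIr K A).
rewrite gen_subG; apply/bigcupsP => i _.
by rewrite setIS ?bigdprod_sub.
Qed.

Lemma bigdprod_gen_conj (B B' : I -> {set gT}) :
    (forall i, B i \subset As i) ->
    (forall i, exists2 x, x \in As i & B' i = B i :^ x) ->
  exists2 a, a \in A & <<\bigcup_i B' i>> = <<\bigcup_i B i>> :^ a.
Proof.
move=> sBAs conjB.
have /fin_all_exists[c cP] : forall i, exists x, x \in As i /\ B' i = B i :^ x.
  by move=> i; have [x Ax eqB'] := conjB i; exists x.
have Ac j : c j \in As j by case: (cP j).
exists (\prod_j c j); first exact: prod_mem_bigdprod.
rewrite -genJ -bigcupJ; congr <<_>>; apply: eq_bigr => i _.
by rewrite (conjsg_bigprod Ac (sBAs i)); case: (cP i).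
Qed.

End BigDirectProduct.

Section HallClasses.
Variables (gT : finGroupType) (pi : nat_pred) (I : finType).
Variables (G H A : {group gT}) (As : I -> {group gT}).
Hypotheses (hallH : pi.-Hall(G) H) (nsAG : A <| G) (nsAsG : forall i, As i <| G).
Hypotheses (defA : \big[dprod/1]_i As i = A) (defG : H * A * 'C_G(A) = G).

Lemma Hall_mul_subcent (K : {group gT}) : pi.-Hall(G) K -> K * A * 'C_G(A) = G.
Proof.
move=> hallK; have [sAG nAG] := andP nsAG.
have nsCG : 'C_G(A) <| G by have := subcent_normal G A; rewrite (setIidPl nAG).
have nACG := subset_trans (normal_sub nsCG) nAG.
have nsACG : A <*> 'C_G(A) <| G by apply: normalY.
rewrite -mulgA -norm_joinEr //; apply: mulg_normal_Hall hallH hallK nsACG _.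
by rewrite /= norm_joinEr // mulgA.
Qed.

Lemma conjsg_Hall_factor (K : {group gT}) i g : pi.-Hall(G) K -> g \in G ->
  exists2 x, x \in As i & (K :&: As i) :^ g = (K :&: As i) :^ x.
Proof.
(* Write g = k a c with k in K, a in A, c in 'C_G(A): k normalizes K :&: As i,
   c centralizes it, and a acts through its As i-component. *)
move=> hallK; rewrite -(Hall_mul_subcent hallK).
case/mulsgP=> _ c /mulsgP[k a Kk Aa ->] /setIP[_ cAc] ->.
have nAsG := normal_norm (nsAsG i); have sAsA := bigdprod_sub defA i.
have Gk := subsetP (pHall_sub hallK) k Kk.
have Ga := subsetP (normal_sub nsAG) a Aa.
have [x Asx defKa] := conjIg_bigdprod defA K i Aa; exists x => //.
rewrite !conjsgM conjIg (conjGid Kk) (normP (subsetP nAsG k Gk)).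
have -> : (K :&: As i) :^ a = (K :&: As i) :^ x.
  by rewrite -defKa conjIg (normP (subsetP nAsG a Ga)).
apply/normP; apply: (subsetP (cent_sub _)); apply: (subsetP (centS _)) cAc.
have Ax := subsetP sAsA x Asx.
by rewrite -(conjGid Ax) conjSg subIset // sAsA orbT.
Qed.

Lemma Hall_classes_eq (K K' : {group gT}) : pi.-Hall(G) K -> pi.-Hall(G) K' ->
  (K :&: A) :^: A = (K' :&: A) :^: A <->
  (forall i, (K :&: As i) :^: As i = (K' :&: As i) :^: As i).
Proof.
move=> hallK hallK'; split=> [/eqP/conjugates_eqP[a Aa defK'A] i | eqAs].
  have [x Asx defx] := conjIg_bigdprod defA (K :&: A) i Aa.
  have IA_As (L : {set gT}) : L :&: A :&: As i = L :&: As i.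
    by rewrite -setIA (setIidPr (bigdprod_sub defA i)).
  by apply/eqP/conjugates_eqP; exists x; rewrite // -IA_As defK'A defx IA_As.
have conjAs i : exists2 x, x \in As i & K' :&: As i = (K :&: As i) :^ x.
  by apply/conjugates_eqP/eqP.
have [a Aa defK'] := bigdprod_gen_conj defA (fun i => subsetIr K (As i)) conjAs.
have HallI (L : {group gT}) : pi.-Hall(G) L -> L :&: A = <<\bigcup_i (L :&: As i)>>.
  move=> hallL; apply: (bigdprod_setI_Hall defA (pHall_pgroup hallL)) => i.
  exact: Hall_setI_normal (nsAsG i) hallL.
by apply/eqP/conjugates_eqP; exists a; rewrite // !HallI.
Qed.

Lemma exists_Hall_factors (Kf : I -> {group gT}) : (forall i, pi.-Hall(G) (Kf i)) ->
  exists2 Q : {group gT}, pi.-Hall(G) Q & forall i, Q :&: As i = Kf i :&: As i.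
Proof.
move=> hallKf; pose U := <<\bigcup_i (Kf i :&: As i)>>%G.
have hallU i : pi.-Hall(As i) (Kf i :&: As i).
  exact: Hall_setI_normal (nsAsG i) (hallKf i).
have hallUA : pi.-Hall(A) U.
  exact: (bigdprod_Hall defA (B := fun i => (Kf i :&: As i)%G)).
have sH_NUA : H \subset 'N(U) * A.
  apply/subsetP => h Hh; have Gh := subsetP (pHall_sub hallH) h Hh.
  have [a Aa defUh] := bigdprod_gen_conj defA (fun i => subsetIr (Kf i) (As i))
    (fun i => conjsg_Hall_factor i (hallKf i) Gh).
  rewrite -(mulgKV a h); apply: mem_mulg => //; apply/normP.
  by rewrite conjsgM -genJ -bigcupJ defUh conjsgK.
have [Q hallQ defQA] := exists_Hall_setI_normal hallH nsAG hallUA sH_NUA.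
exists Q => // i; transitivity (Q :&: A :&: As i).
  by rewrite -setIA (setIidPr (bigdprod_sub defA i)).
rewrite defQA; apply: sub_pHall (hallU i) _ _ (subsetIr _ _).
  exact: pgroupS (subsetIl _ _) (pHall_pgroup hallUA).
by rewrite subsetI subsetIr andbT sub_gen // (bigcup_max i).
Qed.

End HallClasses.

Theorem lemma9 (gT : finGroupType) (pi : nat_pred) (G H A : {group gT})
    (s : nat) (As : 'I_s -> {group gT}) :
  pi.-Hall(G) H ->
  A <| G ->
  (forall i, As i <| G) ->
  \big[dprod/1]_(i < s) As i = A ->
  H * A * 'C_G(A) = G ->
  k_pi pi G A = (\prod_(i < s) k_pi pi G (As i))%N.
Proof.
move=> hallH nsAG nsAsG defA defG.
pose Psi (K : {group gT}) := [ffun i => (gval K :&: As i) :^: As i].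
pose classes_in i :=
  mem [set (gval K :&: As i) :^: As i | K : {group gT} & pi.-Hall(G) K].
rewrite /k_pi (eq_card_in_imset (g := Psi)); last first.
  move=> K K'; rewrite !inE => hallK hallK'.
  have eqAs := Hall_classes_eq nsAsG defA hallK hallK'.
  apply/eqP/eqP => [/eqAs eqAs_i | /ffunP eqPsi].
    by apply/ffunP => i; rewrite !ffunE.
  by apply/eqAs => i; have := eqPsi i; rewrite !ffunE.
rewrite (eq_card (B := family classes_in)); last first.
  move=> f; apply/imsetP/familyP => [[K hallK ->] i | classes_f].
    by rewrite ffunE; apply: imset_f.
  have /fin_all_exists[Kf defKf] i :
      exists K : {group gT}, pi.-Hall(G) K /\ f i = (gval K :&: As i) :^: As i.
    by have /imsetP[K hallK ->] := classes_f i; exists K; rewrite inE in hallK.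
  have [Q hallQ defQ] := exists_Hall_factors hallH nsAG nsAsG defA defG
    (fun i => proj1 (defKf i)).
  exists Q; first by rewrite inE.
  by apply/ffunP => i; rewrite ffunE defQ; case: (defKf i).
by rewrite card_family foldrE big_map big_enum.
Qed.
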